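(* Let $1<p<\infty$. The space $h_p$ is not monotone, and so it is neither normal nor perfect.
   Context: Sequences are complex sequences indexed by positive integers, and $\Delta x_k=x_k-x_{k+1}$. For $1<p<\infty$, $$h_p=\Big\{x:\ \sum_{k=1}^{\infty}(k|\Delta x_k|)^p<\infty,\ \lim_k x_k=0\Big\}.$$ Let $\lambda$ be a sequence space. - $\lambda$ is perfect if $\lambda=\lambda^{\alpha\alpha}$, where $X^\alpha=\{a: (a_kx_k)\in\ell_1\ \forall x\in X\}$. - $\lambda$ is normal if $y\in\lambda$ whenever $|y_k|\le|x_k|$ for all $k$, for some $x\in\lambda$. - $\lambda$ is monotone if it contains the canonical preimages of all its step spaces, i.e. for every $x\in\lambda$ and every set $J$ of indices, the sequence equal to $x_k$ for $k\in J$ and $0$ otherwise belongs to $\lambda$. *)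

From Stdlib Require Import Reals.
From Coquelicot Require Import Coquelicot.
Open Scope R_scope.

(** Sequences are complex sequences; the paper's index k = 1,2,... is
    represented by the nat index n = k - 1 (so x n stands for x_{n+1}). *)
Definition cseq := nat -> C.

Definition rpow (a p : R) : R := if Rle_dec a 0 then 0 else Rpower a p.

Definition Delta (x : cseq) (n : nat) : C := Cminus (x n) (x (S n)).

Definition h_p (p : R) (x : cseq) : Prop :=
  ex_series (fun n => rpow (INR (S n) * Cmod (Delta x n)) p) /\
  filterlim x eventually (locally (0 : C)).

Definition alpha_dual (X : cseq -> Prop) (a : cseq) : Prop :=
  forall x, X x -> ex_series (fun n => Cmod (Cmult (a n) (x n))).

Definition perfect (X : cseq -> Prop) : Prop :=
  forall x, X x <-> alpha_dual (alpha_dual X) x.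

Definition normal (X : cseq -> Prop) : Prop :=
  forall x y, X x -> (forall n, Cmod (y n) <= Cmod (x n)) -> X y.

(** canonical preimage of the step space on the index set J *)
Definition restrict (J : nat -> bool) (x : cseq) : cseq :=
  fun n => if J n then x n else (0 : C).

Definition monotone (X : cseq -> Prop) : Prop :=
  forall x (J : nat -> bool), X x -> X (restrict J x).

From Pilot Require Import Defs.
From Stdlib Require Import Reals Lra Lia.
From Coquelicot Require Import Coquelicot.
Open Scope R_scope.

(* The sequence x_k = 1/k lies in h_p: k Delta x_k = 1/(k+1), and the series of
   (k+1)^(-p) converges for p > 1, as its terms are dominated by the telescoping
   differences of k^(1-p)/(p-1). Keeping only the odd-indexed terms of x makes
   k |Delta x_k| = 1 for every odd k, so monotonicity fails. Normality implies
   monotonicity, and a perfect space is normal because every alpha-dual is. *)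

Lemma inv_succ_le_ln_succ_sub (t : R) : 0 < t -> / (t + 1) <= ln (t + 1) - ln t.
Proof.
  intro ht.
  pose proof (exp_ineq1_le (ln t - ln (t + 1))) as H.
  unfold Rminus at 2 in H.
  rewrite exp_plus, exp_Ropp, !exp_ln in H by lra.
  replace (t * / (t + 1)) with (1 - / (t + 1)) in H by (field; lra).
  lra.
Qed.

(* Discrete form of [t^(1-p) - (t+1)^(1-p) = (p-1) * integral of s^(-p) over [t, t+1]]. *)
Lemma Rpower_opp_le_telescope (p t : R) : 1 <= p -> 0 < t ->
  (p - 1) * Rpower (t + 1) (- p) <= Rpower t (1 - p) - Rpower (t + 1) (1 - p).
Proof.
  intros hp ht. unfold Rpower.
  set (u := ln t). set (v := ln (t + 1)).
  assert (Hgap : exp (- v) <= v - u).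
  { unfold v. rewrite exp_Ropp, exp_ln by lra. apply inv_succ_le_ln_succ_sub, ht. }
  assert (Eu : exp ((1 - p) * u) = exp ((1 - p) * v) * exp ((p - 1) * (v - u))).
  { rewrite <- exp_plus. f_equal. ring. }
  assert (Ev : exp (- p * v) = exp ((1 - p) * v) * exp (- v)).
  { rewrite <- exp_plus. f_equal. ring. }
  rewrite Eu, Ev.
  pose proof (exp_ineq1_le ((p - 1) * (v - u))).
  pose proof (exp_pos ((1 - p) * v)).
  assert ((p - 1) * exp (- v) <= (p - 1) * (v - u)) by (apply Rmult_le_compat_l; lra).
  nra.
Qed.

Lemma ex_series_telescope_bound (a g : nat -> R) :
  (forall n, 0 <= a n) -> (forall n, 0 <= g n) ->
  (forall n, a n <= g n - g (S n)) -> ex_series a.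
Proof.
  intros Ha Hg Hag.
  assert (Hpartial : forall N, sum_f_R0 a N <= g O - g (S N)).
  { induction N as [|N IH]; simpl; [pose proof (Hag O) | pose proof (Hag (S N))]; lra. }
  apply ex_series_Reals_1, growing_cv.
  - intro N. simpl. pose proof (Ha (S N)). lra.
  - exists (g O). intros y [N ->]. pose proof (Hpartial N). pose proof (Hg (S N)). lra.
Qed.

Lemma ex_series_Rpower_opp (p : R) : 1 < p ->
  ex_series (fun n => Rpower (INR (S (S n))) (- p)).
Proof.
  intro hp.
  assert (Hpos : forall n, 0 < INR (S n)) by (intro n; apply lt_0_INR; lia).
  apply ex_series_ext with (a := fun n => (p - 1) * Rpower (INR (S (S n))) (- p) * / (p - 1)).
  { intro n. cbn. field. lra. }
  apply ex_series_scal_r.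
  apply ex_series_telescope_bound with (fun n => Rpower (INR (S n)) (1 - p)).
  - intro n. pose proof (exp_pos (- p * ln (INR (S (S n))))). unfold Rpower. nra.
  - intro n. left. apply exp_pos.
  - intro n. rewrite (S_INR (S n)). apply Rpower_opp_le_telescope; [lra | apply Hpos].
Qed.

Lemma rpow_Rpower (a p : R) : 0 < a -> rpow a p = Rpower a p.
Proof. intro ha. unfold rpow. destruct (Rle_dec a 0); [lra | reflexivity]. Qed.

Lemma rpow_1_l (p : R) : rpow 1 p = 1.
Proof. rewrite rpow_Rpower by lra. unfold Rpower. rewrite ln_1, Rmult_0_r. apply exp_0. Qed.

Lemma filterlim_RtoC (u : nat -> R) (l : R) :
  is_lim_seq u l -> filterlim (fun n => RtoC (u n)) eventually (locally (RtoC l)).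
Proof.
  intro Hu. apply filterlim_locally. intro e.
  apply (filter_imp (fun n => ball l e (u n))).
  - intros n Hn. split; [exact Hn | apply ball_center].
  - exact (proj1 (filterlim_locally u l) Hu e).
Qed.

Lemma not_ex_series_frequently_1 (u : nat -> R) :
  (forall N, exists n, (N <= n)%nat /\ u n = 1) -> ~ ex_series u.
Proof.
  intros Hfreq Hu.
  apply ex_series_lim_0, is_lim_seq_Reals in Hu.
  destruct (Hu 1 Rlt_0_1) as [N HN].
  destruct (Hfreq N) as [n [HNn Hn]].
  specialize (HN n HNn). rewrite Hn in HN. unfold Rdist in HN.
  rewrite Rminus_0_r, Rabs_R1 in HN. lra.
Qed.

Definition harmonic : cseq := fun n => RtoC (/ INR (S n)).

Lemma weighted_Delta_harmonic (n : nat) :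
  INR (S n) * Cmod (Defs.Delta harmonic n) = / INR (S (S n)).
Proof.
  pose proof (pos_INR n).
  unfold Defs.Delta, harmonic. rewrite <- RtoC_minus, Cmod_R, !S_INR.
  rewrite Rabs_pos_eq.
  - field. lra.
  - apply Rge_le, Rge_minus, Rle_ge, Rinv_le_contravar; lra.
Qed.

Lemma harmonic_h_p (p : R) : 1 < p -> h_p p harmonic.
Proof.
  intro hp. split.
  - apply ex_series_ext with (a := fun n => Rpower (INR (S (S n))) (- p)).
    2: apply ex_series_Rpower_opp, hp.
    intro n. rewrite weighted_Delta_harmonic, rpow_Rpower.
    + unfold Rpower. rewrite ln_Rinv by (apply lt_0_INR; lia). f_equal. ring.
    + apply Rinv_0_lt_compat, lt_0_INR. lia.
  - apply (filterlim_RtoC (fun n => / INR (S n)) 0).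
    replace (Finite 0) with (Rbar_inv p_infty) by reflexivity.
    apply is_lim_seq_inv; [| discriminate].
    apply is_lim_seq_incr_1 with (u := INR), is_lim_seq_INR.
Qed.

(* At even [n] the restriction jumps from [1/(n+1)] to [0], so the weighted difference is [1]. *)
Lemma restrict_even_harmonic_not_h_p (p : R) : ~ h_p p (restrict Nat.even harmonic).
Proof.
  intros [Hseries _]. revert Hseries. apply not_ex_series_frequently_1.
  intro N. exists (2 * N)%nat. split; [lia |].
  assert (Hk : 0 < INR (S (2 * N))) by (apply lt_0_INR; lia).
  assert (Heven : Nat.even (2 * N) = true) by (rewrite Nat.even_mul; reflexivity).
  unfold Defs.Delta, restrict, harmonic.
  rewrite Nat.even_succ, <- Nat.negb_even, Heven. cbn [negb].
  rewrite <- RtoC_minus, Rminus_0_r, Cmod_R, Rabs_pos_eq by (left; apply Rinv_0_lt_compat, Hk).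
  rewrite Rinv_r by lra. apply rpow_1_l.
Qed.

Lemma normal_monotone (X : cseq -> Prop) : normal X -> monotone X.
Proof.
  intros HX x J Hx. apply (HX x); [exact Hx |].
  intro n. unfold restrict. destruct (J n).
  - apply Rle_refl.
  - rewrite Cmod_0. apply Cmod_ge_0.
Qed.

Lemma alpha_dual_normal (X : cseq -> Prop) : normal (alpha_dual X).
Proof.
  intros a b Ha Hba x Hx.
  apply (@ex_series_le R_AbsRing R_CompleteNormedModule _ (fun n => Cmod (Cmult (a n) (x n))));
    [| exact (Ha x Hx)].
  intro n. unfold norm; simpl. rewrite Rabs_pos_eq by apply Cmod_ge_0.
  rewrite !Cmod_mult. apply Rmult_le_compat_r; [apply Cmod_ge_0 | apply Hba].
Qed.

Lemma perfect_normal (X : cseq -> Prop) : perfect X -> normal X.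
Proof.
  intros HX x y Hx Hyx. apply HX.
  apply (alpha_dual_normal (alpha_dual X) x y); [apply HX, Hx | exact Hyx].
Qed.

Theorem corollary3p11 (p : R) (hp : 1 < p) :
  ~ monotone (h_p p) /\ ~ normal (h_p p) /\ ~ perfect (h_p p).
Proof.
  assert (Hmono : ~ monotone (h_p p)).
  { intro Hm. apply (restrict_even_harmonic_not_h_p p), Hm, harmonic_h_p, hp. }
  split; [exact Hmono |].
  split; intro H; apply Hmono.
  - apply normal_monotone, H.
  - apply normal_monotone, perfect_normal, H.
Qed.
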